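(* Fix $h\in\mathbb N$. Letting $n$ range over $\mathbb N^+$ and $u,v$ over $\mathfrak S_n$, there are only finitely many isomorphism classes of $h$-flipclasses.
   Context: $\mathfrak S_n$ is the symmetric group on $[n]$, $T$ its transpositions, $\ell$ the length w.r.t. simple transpositions. The Bruhat graph $B(\mathfrak S_n)$ has an edge $x\xrightarrow{t}y$ iff $yx^{-1}=t\in T$ and $\ell(x)<\ell(y)$; $P_h(u,v)$ is the set of paths $u=x_0\to\cdots\to x_h=v$ of length $h$. Between two fixed vertices there are $0$ or $2$ paths of length $2$, each the flip of the other; the $i$-th flip operator $f_i$ ($i\in[h-1]$) on $P_h(u,v)$ replaces $x_{i-1}\to x_i\to x_{i+1}$ by its flip; an $h$-flipclass of $\mathfrak S_n$ is an orbit of $\langle f_1,\dots,f_{h-1}\rangle$ on some $P_h(u,v)$. Isomorphism: for an $h$-flipclass $F$ of $\mathfrak S_n$ and an $h$-flipclass $F'$ of $\mathfrak S_m$, an isomorphism from $F$ to $F'$ is a pair $(f,g)$ where $f$ is a bijection from the set of permutations occurring on paths of $F$ onto that for $F'$ such that applying $f$ vertexwise gives a bijection $F\to F'$ commuting with the flip operators; $g$ is a bijection from the set of transpositions labelling edges of paths of $F$ onto that for $F'$ such that if $\Gamma\in F$ has label sequence $(t_1,\dots,t_h)$ then its image has label sequence $(g(t_1),\dots,g(t_h))$; and $g$ is order-preserving for the lexicographic orders on transpositions ($(a,b)<(c,d)$, with $a<b$, $c<d$, iff $a<c$, or $a=c$ and $b<d$). *)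

From mathcomp Require Import all_boot all_fingroup.
From mathcomp Require Import zify.
Set Implicit Arguments.
Unset Strict Implicit.
Unset Printing Implicit Defensive.

(* Coxeter length of a permutation of 'I_n w.r.t. simple transpositions *)
(* (i, i+1): the least k such that x is a product of k of them.        *)

Definition adjw n (w : seq ('I_n * 'I_n)) :=
  all (fun p : 'I_n * 'I_n => val p.2 == (val p.1).+1) w.

Definition wprod n (w : seq ('I_n * 'I_n)) : {perm 'I_n} :=
  (\prod_(p <- w) tperm p.1 p.2)%g.

Definition has_word n (x : {perm 'I_n}) (k : nat) : bool :=
  [exists w : k.-tuple ('I_n * 'I_n), adjw w && (wprod w == x)].

Lemma tperm_adj n (a b : 'I_n) : exists w, adjw w && (wprod w == tperm a b).
Proof.
wlog le_ab : a b / a <= b.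
  move=> H; case: (leqP a b) => h; first exact: H.
  by rewrite tpermC; apply: H; apply: ltnW.
move Hd: (b - a) => d; elim: d b le_ab Hd => [|d IH] b le_ab Hd.
  have -> : b = a by apply: ord_inj; move: le_ab Hd; lia.
  by exists [::]; rewrite /wprod big_nil tperm1 eqxx.
have lt_ab : a < b by move: Hd; lia.
have Hc : (nat_of_ord b).-1 < n by have := ltn_ord b; lia.
pose c : 'I_n := Ordinal Hc.
have Hbc : nat_of_ord b = (nat_of_ord c).+1 by rewrite /=; move: lt_ab; lia.
case: d IH Hd => [|d] IH Hd.
  have Hac : c = a.
    apply: ord_inj; rewrite /c /=; move: Hd lt_ab. lia.
  by exists [:: (a, b)]; rewrite /adjw /wprod big_seq1 /= -Hac Hbc !eqxx.
have le_ac : a <= c by move: lt_ab Hbc; lia.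
have Hd' : c - a = d.+1.
  by move: Hbc Hd le_ac; lia.
have [w /andP[Hw /eqP Pw]] := IH c le_ac Hd'.
exists ((c, b) :: w ++ [:: (c, b)]).
rewrite /adjw /= all_cat /= -/(adjw w) Hw Hbc eqxx /=.
rewrite /wprod big_cons big_cat big_seq1 /= -/(wprod w) Pw.
have -> : (tperm c b * (tperm a c * tperm c b) = tperm a c ^ tperm c b)%g.
  by rewrite /conjg tpermV mulgA.
rewrite tpermJ tpermL tpermD //.
- by apply/eqP => E; move: (congr1 (@nat_of_ord n) E) le_ac Hbc => /=; lia.
- by apply/eqP => E; move: (congr1 (@nat_of_ord n) E) lt_ab => /=; lia.
Qed.

Lemma has_word_ex n (x : {perm 'I_n}) : exists k, has_word x k.
Proof.
have [ts -> _] := prod_tpermP x.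
suff [w [Hw Hp]] : exists w, adjw w /\ wprod w = (\prod_(t <- ts) tperm t.1 t.2)%g.
  by exists (size w); apply/existsP; exists (in_tuple w); rewrite /= Hw Hp eqxx.
elim: ts => [|t ts [w [Hw Hp]]]; first by exists [::]; rewrite /wprod !big_nil.
have [w1 /andP[H1 /eqP P1]] := tperm_adj t.1 t.2.
exists (w1 ++ w); split; first by rewrite /adjw all_cat -/(adjw w1) -/(adjw w) H1 Hw.
by rewrite /wprod big_cat big_cons /= -/(wprod w1) -/(wprod w) P1 Hp.
Qed.

Definition ell n (x : {perm 'I_n}) : nat := ex_minn (has_word_ex x).

Definition is_transp n (t : {perm 'I_n}) : bool :=
  [exists a : 'I_n, exists b : 'I_n, (a != b) && (t == tperm a b)].

(* label of the edge x -> y : the permutation  y x^{-1}  (as functions,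
   apply x^{-1} first); in MathComp (s * t) z = t (s z), so this is
   (x^-1 * y)%g. *)
Definition blabel n (x y : {perm 'I_n}) : {perm 'I_n} := (x^-1 * y)%g.

Definition bedge n (x y : {perm 'I_n}) : bool :=
  is_transp (blabel x y) && (ell x < ell y).

(* Paths of length h: vertex sequences x_0, ..., x_h                   *)

Notation hpath h n := {ffun 'I_h.+1 -> {perm 'I_n}}.

Definition src h (k : 'I_h) : 'I_h.+1 := widen_ord (leqnSn h) k.
Definition tgt h (k : 'I_h) : 'I_h.+1 := lift ord0 k.

Definition is_bpath h n (G : hpath h n) : bool :=
  [forall k : 'I_h, bedge (G (src k)) (G (tgt k))].

Definition Ph h n (u v : {perm 'I_n}) : {set hpath h n} :=
  [set G | [&& is_bpath G, G ord0 == u & G ord_max == v]].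

(* The i-th flip operator (meaningful for 0 < i < h): replaces the
   middle vertex x_i of x_{i-1} -> x_i -> x_{i+1} by the middle vertex
   of the other length-2 path between x_{i-1} and x_{i+1}. *)
Definition flip h n (i : 'I_h.+1) (G : hpath h n) : hpath h n :=
  if (0 < i) && (i < h) then
    match [pick z | [&& z != G i, bedge (G (inord i.-1)) z
                                 & bedge z (G (inord i.+1))]] with
    | Some z => [ffun k => if k == i then z else G k]
    | None => G
    end
  else G.

Definition flipstep h n (G G' : hpath h n) : bool :=
  [exists i : 'I_h.+1, [&& 0 < i, i < h & G' == flip i G]].

(* orbit of G under the group generated by f_1, ..., f_{h-1} *)
Definition flip_orbit h n (G : hpath h n) : {set hpath h n} :=
  [set G' | connect (@flipstep h n) G G'].

Definition is_flipclass h n (F : {set hpath h n}) : Prop :=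
  exists (u v : {perm 'I_n}) (G : hpath h n), G \in Ph h u v /\ F = flip_orbit G.

Definition fverts h n (F : {set hpath h n}) : {set {perm 'I_n}} :=
  [set x | [exists G in F, exists k, G k == x]].

Definition flabels h n (F : {set hpath h n}) : {set {perm 'I_n}} :=
  [set t | [exists G in F, exists k : 'I_h, t == blabel (G (src k)) (G (tgt k))]].

Definition mapP h n m (f : {perm 'I_n} -> {perm 'I_m}) (G : hpath h n) : hpath h m :=
  [ffun k => f (G k)].

Definition tlt n (t t' : {perm 'I_n}) : bool :=
  [exists a : 'I_n, exists b : 'I_n, exists c : 'I_n, exists d : 'I_n,
     [&& a < b, c < d, t == tperm a b, t' == tperm c d &
         (a < c) || ((a == c) && (b < d))]].

Definition flip_iso h n m (F : {set hpath h n}) (F' : {set hpath h m}) : Prop :=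
  exists (f : {perm 'I_n} -> {perm 'I_m}) (g : {perm 'I_n} -> {perm 'I_m}),
    [/\ ({in fverts F &, injective f} /\ f @: fverts F = fverts F'),
        ({in F &, injective (mapP f)} /\ (mapP f) @: F = F'),
        (forall G, G \in F -> forall i : 'I_h.+1, 0 < i -> i < h ->
            mapP f (flip i G) = flip i (mapP f G)),
        ({in flabels F &, injective g} /\ g @: flabels F = flabels F')
      & (forall G, G \in F -> forall k : 'I_h,
            blabel (mapP f G (src k)) (mapP f G (tgt k))
            = g (blabel (G (src k)) (G (tgt k))))
        /\ (forall t1 t2, t1 \in flabels F -> t2 \in flabels F ->
           tlt t1 t2 -> tlt (g t1) (g t2))].

(* An h-path from u changes u only at the at most 2h letters moved by its
   transposition labels.  By the characterization of Bruhat edges through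
   inversions (the length is the number of inversions, and x -> x (p r) goes
   up iff x^-1 keeps p, r in order), the middle vertex of a length-2 path
   between two permutations agreeing with u off a set S of letters again agrees
   with u off S, so the whole flipclass lives on permutations agreeing with u
   off S, with labels supported on S.  Standardizing such a permutation to its
   pattern on S, a permutation of 'I_#|S|, preserves Bruhat edges, maps labels
   by the order-preserving relabelling of S (which preserves the lexicographic
   order), and commutes with flips because between two vertices there are 0 or
   2 paths of length 2.  Hence every h-flipclass is isomorphic to a flipclass of
   some S_k with 1 <= k <= 2h+1, and there are finitely many of those. *)

From mathcomp Require Import all_boot all_order all_fingroup zify.

Set Implicit Arguments.
Unset Strict Implicit.
Unset Printing Implicit Defensive.

(** * Length and inversions *)

Lemma big_pair_split (T : finType) (F : T -> T -> nat) (a b : T) : a != b ->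
  \sum_c \sum_d F c d =
  F a a + F a b + F b a + F b b +
  \sum_(w | (w != a) && (w != b)) (F a w + F b w + F w a + F w b) +
  \sum_(c | (c != a) && (c != b)) \sum_(d | (d != a) && (d != b)) F c d.
Proof.
move=> ab.
have split_ab X : \sum_c X c = X a + X b + \sum_(c | (c != a) && (c != b)) X c.
  rewrite (bigD1 a) //= (bigD1 b) /=; last by rewrite eq_sym.
  by rewrite addnA; congr (_ + _); apply: eq_bigl => c; rewrite andbC.
rewrite (split_ab (fun c => \sum_d F c d)) (split_ab (F a)) (split_ab (F b)).
under [X in _ + X = _]eq_bigr => c _ do rewrite split_ab.
rewrite !big_split /=; lia.
Qed.

Section Inversions.
Variable n : nat.
Implicit Types (s x : {perm 'I_n}) (a b c d w : 'I_n).

Definition ninv s : nat := \sum_(c : 'I_n) \sum_(d : 'I_n) ((c < d) && (s d < s c)).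

Lemma ninv_swap a b s : a < b -> s a < s b ->
  ninv (tperm a b * s) =
  (ninv s).+1 + 2 * \sum_(w : 'I_n) [&& a < w, w < b, s a < s w & s w < s b].
Proof.
move=> ab sab; have nab : a != b by rewrite neq_ltn ab.
pose F1 c d := nat_of_bool ((c < d) && (s d < s c)).
pose F2 c d := nat_of_bool ((c < d) && ((tperm a b * s)%g d < (tperm a b * s)%g c)).
rewrite /ninv -/(\sum_c \sum_d F1 c d) -/(\sum_c \sum_d F2 c d).
rewrite (big_pair_split F1 nab) (big_pair_split F2 nab).
have -> : \sum_(c | (c != a) && (c != b)) \sum_(d | (d != a) && (d != b)) F2 c d
        = \sum_(c | (c != a) && (c != b)) \sum_(d | (d != a) && (d != b)) F1 c d.
  apply: eq_bigr => c /andP[ca cb]; apply: eq_bigr => d /andP[da db].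
  by rewrite /F1 /F2 !permM !tpermD // eq_sym.
have -> : \sum_(w : 'I_n) [&& a < w, w < b, s a < s w & s w < s b]
        = \sum_(w | (w != a) && (w != b)) [&& a < w, w < b, s a < s w & s w < s b].
  rewrite [RHS]big_mkcond /=; apply: eq_bigr => w _.
  by case: eqVneq => [->|_]; rewrite ?ltnn //=; case: eqVneq => [->|_]; rewrite ?ltnn ?andbF.
have -> : \sum_(w | (w != a) && (w != b)) (F2 a w + F2 b w + F2 w a + F2 w b)
        = \sum_(w | (w != a) && (w != b)) (F1 a w + F1 b w + F1 w a + F1 w b
             + 2 * [&& a < w, w < b, s a < s w & s w < s b]).
  apply: eq_bigr => w /andP[wa wb].
  rewrite /F1 /F2 !permM tpermL tpermR tpermD 1?eq_sym //.
  have swa : s w != s a by rewrite (inj_eq perm_inj).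
  have swb : s w != s b by rewrite (inj_eq perm_inj).
  have neq (c d : 'I_n) : c != d -> (c : nat) != d by [].
  move: (neq _ _ wa) (neq _ _ wb) (neq _ _ swa) (neq _ _ swb) ab sab.
  (* [set] merges coercions that differ only in hidden type arguments, so that lia
     sees a single atom for each of them. *)
  set W := (w : nat); set SW := (s w : nat); set SA := (s a : nat); set SB := (s b : nat).
  lia.
rewrite big_split /= -big_distrr /= /F1 /F2 !permM tpermL tpermR !ltnn ab sab.
rewrite (ltnNge b) (ltnW ab) (ltnNge (s b)) (ltnW sab) /=; lia.
Qed.

Lemma ninv_swap_lt a b s : a < b -> s a < s b -> ninv s < ninv (tperm a b * s).
Proof. by move=> ab sab; rewrite ninv_swap //; lia. Qed.

Lemma ninv_swap_adj a b s : val b = (val a).+1 -> s a < s b ->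
  ninv (tperm a b * s) = (ninv s).+1.
Proof.
move=> Eb sab; have ab : a < b by rewrite Eb.
rewrite ninv_swap // big1 ?muln0 ?addn0 // => w _.
by rewrite Eb ltnS; case: leqP.
Qed.

Lemma ninvV s : ninv s^-1 = ninv s.
Proof.
rewrite /ninv (reindex_inj (@perm_inj _ s)).
under eq_bigr => c _ do rewrite (reindex_inj (@perm_inj _ s)).
rewrite exchange_big /=; apply: eq_bigr => c _; apply: eq_bigr => d _.
by rewrite !permK andbC.
Qed.

Lemma ninv1 : ninv 1 = 0.
Proof. by rewrite /ninv big1 // => c _; rewrite big1 // => d _; rewrite !perm1; case: ltngtP. Qed.

Lemma ninv_adj_mul a b s : val b = (val a).+1 ->
  ninv (tperm a b * s) = (ninv s).+1 \/ (ninv (tperm a b * s)).+1 = ninv s.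
Proof.
move=> Eb; case: (ltngtP (s a) (s b)) => [sab|sba|/val_inj/perm_inj eab].
- by left; apply: ninv_swap_adj.
- right; set q := (tperm a b * s)%g.
  have -> : s = (tperm a b * q)%g by rewrite /q mulgA tperm2 mul1g.
  by rewrite ninv_swap_adj // /q !permM tpermL tpermR.
- by move: Eb; rewrite eab; lia.
Qed.

Lemma ninv_wprod (ws : seq ('I_n * 'I_n)) : adjw ws -> ninv (wprod ws) <= size ws.
Proof.
elim: ws => [|p ws IH]; first by rewrite /wprod big_nil ninv1.
rewrite /adjw /= => /andP[/eqP Ep adj_ws].
rewrite /wprod big_cons -/(wprod ws).
by have := IH adj_ws; case: (ninv_adj_mul (wprod ws) Ep) => E; lia.
Qed.

Lemma increasing_perm_id x : {homo x : c d / c < d} -> x = 1%g.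
Proof.
have ge_id (y : {perm 'I_n}) : {homo y : c d / c < d} -> forall c, c <= y c.
  move=> incr_y [m]; elim: m => [|m IH] lt_mn //=.
  have lt_m : m < n by lia.
  by have := IH lt_m; have := incr_y (Ordinal lt_m) (Ordinal lt_mn) (ltnSn m) => /=; lia.
move=> incr_x.
have incr_xV : {homo x^-1%g : c d / c < d}.
  move=> c d cd; case: (ltngtP (x^-1%g c) (x^-1%g d)) => // [/incr_x|/val_inj/perm_inj cd_eq].
    by rewrite !permKV; lia.
  by move: cd; rewrite cd_eq ltnn.
apply/permP => c; rewrite perm1; apply: val_inj => /=.
by have := ge_id _ incr_x c; have := ge_id _ incr_xV (x c); rewrite permK; lia.
Qed.

Lemma increasing_of_adj x :
  (forall a b, val b = (val a).+1 -> x a < x b) -> {homo x : c d / c < d}.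
Proof.
move=> adj_incr c d cd.
suff incr_from_c k (e : 'I_n) : (e : nat) = c + k.+1 -> x c < x e.
  by apply: (incr_from_c (d - c.+1)); lia.
elim: k e => [|k IH] e Ee; first by apply: adj_incr; rewrite /= Ee addn1.
have lt_ck : c + k.+1 < n by have := ltn_ord e; lia.
have := IH (Ordinal lt_ck) erefl; have := adj_incr (Ordinal lt_ck) e.
by rewrite /= Ee addnS => /(_ erefl); lia.
Qed.

Lemma ninv_adjacent_descent x : x != 1%g ->
  exists a b, val b = (val a).+1 /\ ninv x = (ninv (tperm a b * x)).+1.
Proof.
move=> x_neq1.
have [a [b [Eb xba]]] : exists a b, val b = (val a).+1 /\ x b < x a.
  case/boolP: [exists a, exists b, (val b == (val a).+1) && (x b < x a)].
    by case/existsP=> a /existsP[b /andP[/eqP Eb xba]]; exists a, b.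
  move=> no_descent; case/eqP: x_neq1; apply/increasing_perm_id/increasing_of_adj => a b Eb.
  case: (ltngtP (x a) (x b)) => // [xba | /val_inj/perm_inj eab].
    by case/negP: no_descent; apply/existsP; exists a; apply/existsP; exists b; rewrite Eb eqxx xba.
  by move: Eb; rewrite eab; lia.
exists a, b; split => //.
by rewrite -(ninv_swap_adj Eb) ?mulgA ?tperm2 ?mul1g // !permM tpermL tpermR.
Qed.

Lemma has_word_ninv x : has_word x (ninv x).
Proof.
move Em: (ninv x) => m; elim: m x Em => [|m IH] x Em;
  case: (eqVneq x 1%g) => [x1|/ninv_adjacent_descent[a [b [Eb Ex]]]].
- by rewrite x1; apply/existsP; exists [tuple]; rewrite /adjw /wprod /= big_nil.
- by rewrite Ex in Em.
- by rewrite x1 ninv1 in Em.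
- have /existsP[w /andP[adj_w /eqP Ew]] : has_word (tperm a b * x) m by apply: IH; lia.
  apply/existsP; exists [tuple of (a, b) :: w].
  rewrite /adjw /= Eb eqxx -/(adjw w) adj_w /wprod big_cons -/(wprod w) Ew.
  by rewrite mulgA tperm2 mul1g eqxx.
Qed.

Lemma ell_ninv x : ell x = ninv x.
Proof.
rewrite /ell; case: ex_minnP => m /existsP[w /andP[adj_w /eqP Ew]] min_m.
apply/eqP; rewrite eqn_leq min_m ?has_word_ninv //=.
by have := ninv_wprod adj_w; rewrite Ew size_tuple.
Qed.

Lemma ell_mul_tperm x p r : p != r ->
  (ell x < ell (x * tperm p r)%g) = ((p < r) == (x^-1%g p < x^-1%g r)).
Proof.
have up (p' r' : 'I_n) : p' < r' -> (ninv x < ninv (x * tperm p' r')) = (x^-1%g p' < x^-1%g r').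
  move=> pr; rewrite -(ninvV x) -(ninvV (x * tperm p' r')) invMg tpermV.
  case: (ltngtP (x^-1%g p') (x^-1%g r')) => [lt|gt|/val_inj/perm_inj E].
  - exact: ninv_swap_lt.
  - apply/negbTE; rewrite -leqNgt ltnW //.
    rewrite -{2}[x^-1%g]mul1g -(tperm2 p' r') -mulgA ninv_swap_lt //.
    by rewrite !permM tpermL tpermR.
  - by move: pr; rewrite E ltnn.
rewrite !ell_ninv => neq_pr; case: (ltngtP p r) => [pr|rp|/val_inj E].
- by rewrite up // pr.
- rewrite tpermC up // ltn_neqAle leqNgt val_eqE (inj_eq perm_inj) eq_sym neq_pr.
  by case: (x^-1%g p < x^-1%g r).
- by rewrite E eqxx in neq_pr.
Qed.

End Inversions.

(** * Products of two transpositions and paths of length 2 *)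

Lemma tpermE (T : finType) (a b u : T) :
  tperm a b u = if u == a then b else if u == b then a else u.
Proof.
by case: tpermP => [->|->|/eqP/negbTE-> /eqP/negbTE->]; rewrite ?eqxx //; case: eqP => // ->.
Qed.

(* Evaluates tperm at points whose (in)equalities with the swapped points are hypotheses. *)
Ltac tperm_simpl :=
  rewrite ?tpermE;
  repeat (rewrite ?eqxx /=;
          match goal with
          | H : is_true (?x != ?y) |- context[?x == ?y] => rewrite (negbTE H)
          | H : is_true (?x != ?y) |- context[?y == ?x] => rewrite [y == x]eq_sym (negbTE H)
          end); rewrite ?eqxx /=; try done; try by rewrite eq_sym.

Section TranspositionProducts.
Variable T : finType.
Implicit Types (a b c d e f p r u v w : T) (rho : {perm T}).

Lemma tperm_moved e f u v : tperm e f u = v -> u != v -> tperm e f = tperm u v.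
Proof.
case: tpermP => [-> <- //|-> <- _|_ _ <-]; first by rewrite tpermC.
by rewrite eqxx.
Qed.

Lemma tperm_moved2 e f u v : tperm e f u != u -> tperm e f v != v -> v = u \/ v = tperm e f u.
Proof.
move=> moved_u; have := tperm_moved (erefl (tperm e f u)); rewrite eq_sym => /(_ moved_u).
move: (tperm e f u) => w ->.
by case: tpermP => [->|->|_ _]; [left|right|rewrite eqxx].
Qed.

Lemma tperm_mul_eq1 p r e f v :
  (tperm p r * tperm e f)%g v = v -> tperm p r v != v -> (tperm p r * tperm e f = 1)%g.
Proof.
rewrite permM => fix_v moved_v; set w := tperm p r v in fix_v moved_v.
have -> : tperm e f = tperm w v by apply: tperm_moved.
have -> : tperm p r = tperm v w by apply: tperm_moved; rewrite // eq_sym.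
by rewrite tpermC tperm2.
Qed.

Lemma tperm_mul_moved p r e f rho v : (tperm p r * tperm e f)%g = rho -> rho != 1%g ->
  tperm p r v != v -> rho v != v.
Proof.
move=> <- rho_neq1 moved_v; apply: contra rho_neq1 => /eqP fix_v.
by rewrite (tperm_mul_eq1 fix_v moved_v).
Qed.

Lemma perm_on_tperm_mull (S : {set T}) p r e f :
  perm_on S (tperm p r * tperm e f)%g -> (tperm p r * tperm e f != 1)%g -> perm_on S (tperm p r).
Proof.
move=> /subsetP on_S neq1; apply/subsetP => w; rewrite inE => moved_w.
by apply: on_S; rewrite inE (tperm_mul_moved erefl neq1 moved_w).
Qed.

Lemma tperm_mul_fixed2 p r e f rho u w : (tperm p r * tperm e f)%g = rho ->
  tperm p r u = u -> tperm p r w = w -> w != u ->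
  rho u != u -> rho w != w -> rho u != w -> False.
Proof.
move=> <- fix_u fix_w wu; rewrite !permM fix_u fix_w => moved_u moved_w.
by case: (tperm_moved2 moved_u moved_w) wu => ->; rewrite eqxx.
Qed.

Lemma tperm_mul_disjoint a b c d p r e f :
  a != b -> c != d -> a != c -> a != d -> b != c -> b != d -> p != r ->
  (tperm p r * tperm e f = tperm a b * tperm c d)%g ->
  tperm p r = tperm a b \/ tperm p r = tperm c d.
Proof.
move=> ab cd ac ad bc bd pr E; set rho := (tperm a b * tperm c d)%g in E.
have rhoE u : rho u = tperm c d (tperm a b u) by rewrite permM.
have rho_a : rho a != a by rewrite rhoE; tperm_simpl.
have rho_neq1 : rho != 1%g by apply: contraNneq rho_a => ->; rewrite perm1.
have supp v : tperm p r v != v -> [|| v == a, v == b, v == c | v == d].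
  move=> /(tperm_mul_moved E rho_neq1); apply: contraR; rewrite !negb_or.
  by case/and4P=> va vb vc vd; rewrite rhoE; tperm_simpl.
have ba : b != a by rewrite eq_sym.
have dc : d != c by rewrite eq_sym.
have moved_p : tperm p r p != p by rewrite tpermL eq_sym.
have moved_r : tperm p r r != r by rewrite tpermR.
(* In a mixed case such as (p r) = (a c), the factor (e f) would have to send
   both b to a and d to c. *)
case/or4P: (supp p moved_p) => /eqP Ep; case/or4P: (supp r moved_r) => /eqP Er;
  subst p r; rewrite ?eqxx // in pr;
  try by [left | right | left; rewrite tpermC | right; rewrite tpermC];
  exfalso; first
    [ by apply: (tperm_mul_fixed2 (u := a) (w := c) E); rewrite ?rhoE; tperm_simpl
    | by apply: (tperm_mul_fixed2 (u := a) (w := d) E); rewrite ?rhoE; tperm_simpl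
    | by apply: (tperm_mul_fixed2 (u := b) (w := c) E); rewrite ?rhoE; tperm_simpl
    | by apply: (tperm_mul_fixed2 (u := b) (w := d) E); rewrite ?rhoE; tperm_simpl ].
Qed.

Lemma tperm_mul_3cycle a b c p r e f :
  a != b -> b != c -> a != c -> p != r ->
  (tperm p r * tperm e f = tperm a b * tperm b c)%g ->
  [\/ tperm p r = tperm a b, tperm p r = tperm b c | tperm p r = tperm a c].
Proof.
move=> ab bc ac pr E; set rho := (tperm a b * tperm b c)%g in E.
have rhoE u : rho u = tperm b c (tperm a b u) by rewrite permM.
have rho_a : rho a != a by rewrite rhoE; tperm_simpl.
have rho_neq1 : rho != 1%g by apply: contraNneq rho_a => ->; rewrite perm1.
have supp v : tperm p r v != v -> [|| v == a, v == b | v == c].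
  move=> /(tperm_mul_moved E rho_neq1); apply: contraR; rewrite !negb_or.
  by case/and3P=> va vb vc; rewrite rhoE; tperm_simpl.
have moved_p : tperm p r p != p by rewrite tpermL eq_sym.
have moved_r : tperm p r r != r by rewrite tpermR.
case/or3P: (supp p moved_p) => /eqP Ep; case/or3P: (supp r moved_r) => /eqP Er;
  subst p r; rewrite ?eqxx // in pr;
  by [constructor 1 | constructor 2 | constructor 3 | rewrite tpermC; constructor 1
     | rewrite tpermC; constructor 2 | rewrite tpermC; constructor 3].
Qed.

Lemma tperm_3cycleE a b c : a != b -> b != c -> a != c ->
  (tperm a b * tperm b c = tperm b c * tperm a c)%g /\
  (tperm a b * tperm b c = tperm a c * tperm a b)%g.
Proof.
move=> ab bc ac; split; apply/permP => u; rewrite !permM;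
  (case: (eqVneq u a) => [->|ua]; [tperm_simpl | case: (eqVneq u b) => [->|ub];
  [tperm_simpl | case: (eqVneq u c) => [->|uc]; tperm_simpl]]).
Qed.

Lemma tperm_pair_cases a b c d : a != b -> c != d ->
  [\/ tperm c d = tperm a b,
      [/\ a != c, a != d, b != c & b != d]
    | exists a' b' c', [/\ a' != b', b' != c', a' != c',
                           tperm a b = tperm a' b' & tperm c d = tperm b' c']].
Proof.
move=> ab cd; have ba : b != a by rewrite eq_sym.
case: (eqVneq c a) => [Eca|ca]; last case: (eqVneq c b) => [Ecb|cb].
- subst c; case: (eqVneq d b) => [->|db]; first by constructor 1.
  by constructor 3; exists b, a, d; split; rewrite // 1?tpermC // eq_sym.
- subst c; case: (eqVneq d a) => [->|da]; first by constructor 1; rewrite tpermC.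
  by constructor 3; exists a, b, d; split; rewrite // eq_sym.
case: (eqVneq d a) => [Eda|da]; last case: (eqVneq d b) => [Edb|db].
- by subst d; constructor 3; exists b, a, c; split; rewrite // 1?tpermC // eq_sym.
- by subst d; constructor 3; exists a, b, c; split; rewrite // 1?tpermC // eq_sym.
by constructor 2.
Qed.

End TranspositionProducts.

Section BruhatDiamond.
Variable n : nat.
Implicit Types (x y z : {perm 'I_n}) (a b c d p r : 'I_n).

Lemma bedge_mul_tperm x z : bedge x z ->
  exists a b, [/\ a != b, z = (x * tperm a b)%g & ell x < ell z].
Proof.
move=> /andP[/existsP[a /existsP[b /andP[ab /eqP E]]] lt_xz].
by exists a, b; split => //; rewrite -E /blabel mulKVg.
Qed.

Lemma not_all_3cycle_paths_up x a b c : a != b -> b != c -> a != c ->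
  ell x < ell (x * tperm a b)%g -> ell (x * tperm a b)%g < ell (x * tperm a b * tperm b c)%g ->
  ell x < ell (x * tperm b c)%g -> ell (x * tperm b c)%g < ell (x * tperm b c * tperm a c)%g ->
  ell x < ell (x * tperm a c)%g -> ell (x * tperm a c)%g < ell (x * tperm a c * tperm a b)%g ->
  False.
Proof.
move=> ab bc ac; have [ba cb ca] : [/\ b != a, c != b & c != a] by split; rewrite eq_sym.
(* Each of the six ascents fixes the relative order of two of x^-1 a, x^-1 b, x^-1 c,
   and the six constraints are inconsistent. *)
rewrite !ell_mul_tperm // !invMg !permM !tpermV; tperm_simpl.
have neq (u v : 'I_n) : u != v -> (u : nat) != v by [].
have xneq u v : u != v -> (x^-1%g u : nat) != x^-1%g v by rewrite val_eqE (inj_eq perm_inj).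
move: (neq _ _ ab) (neq _ _ bc) (neq _ _ ac) (xneq _ _ ab) (xneq _ _ bc) (xneq _ _ ac).
set A := (a : nat); set B := (b : nat); set C := (c : nat).
set XA := (x^-1%g a : nat); set XB := (x^-1%g b : nat); set XC := (x^-1%g c : nat).
lia.
Qed.

Lemma bruhat_3cycle_mid_uniq x a b c t1 t2 : a != b -> b != c -> a != c ->
  let y := (x * tperm a b * tperm b c)%g in
  ell x < ell (x * tperm a b)%g -> ell (x * tperm a b)%g < ell y ->
  t1 = tperm b c \/ t1 = tperm a c -> t2 = tperm b c \/ t2 = tperm a c ->
  ell x < ell (x * t1)%g -> ell (x * t1)%g < ell y ->
  ell x < ell (x * t2)%g -> ell (x * t2)%g < ell y ->
  t1 = t2.
Proof.
move=> ab bc ac y up0 up0' T1 T2 up1 up1' up2 up2'.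
have [E1 E2] := tperm_3cycleE ab bc ac.
have [Y1 Y2] : y = (x * tperm b c * tperm a c)%g /\ y = (x * tperm a c * tperm a b)%g.
  by split; rewrite /y -!mulgA; [rewrite E1 | rewrite E2].
case: T1 T2 up1 up1' up2 up2' => -> [] -> // up1 up1' up2 up2'; exfalso.
- by apply: (not_all_3cycle_paths_up ab bc ac up0 up0' up1 _ up2); rewrite -?Y1 -?Y2.
- by apply: (not_all_3cycle_paths_up ab bc ac up0 up0' up2 _ up1); rewrite -?Y1 -?Y2.
Qed.

Lemma bruhat_mid_uniq x y z0 z1 z2 :
  bedge x z0 -> bedge z0 y -> bedge x z1 -> bedge z1 y -> bedge x z2 -> bedge z2 y ->
  z1 != z0 -> z2 != z0 -> z1 = z2.
Proof.
move=> /bedge_mul_tperm[a [b [ab -> up0]]] /bedge_mul_tperm[c [d [cd -> up0']]].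
move=> /bedge_mul_tperm[p1 [r1 [pr1 -> up1]]] /bedge_mul_tperm[e1 [f1 [_ E1 up1']]].
move=> /bedge_mul_tperm[p2 [r2 [pr2 -> up2]]] /bedge_mul_tperm[e2 [f2 [_ E2 up2']]].
rewrite !(inj_eq (mulgI x)) => n1 n2; congr (x * _)%g.
have F1 : (tperm p1 r1 * tperm e1 f1 = tperm a b * tperm c d)%g.
  by apply: (mulgI x); rewrite !mulgA -E1.
have F2 : (tperm p2 r2 * tperm e2 f2 = tperm a b * tperm c d)%g.
  by apply: (mulgI x); rewrite !mulgA -E2.
case: (tperm_pair_cases ab cd) => [Ecd | [ac ad bc bd] | [a' [b' [c' [a'b' b'c' a'c' Eab Ecd]]]]].
- by move: up0'; rewrite Ecd -mulgA tperm2 mulg1; lia.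
- case: (tperm_mul_disjoint ab cd ac ad bc bd pr1 F1) => [E|->]; first by rewrite E eqxx in n1.
  by case: (tperm_mul_disjoint ab cd ac ad bc bd pr2 F2) => [E|->] //; rewrite E eqxx in n2.
rewrite Eab Ecd in F1 F2 n1 n2 up0 up0' up1' up2'.
have cand p r e f : p != r -> (tperm p r * tperm e f = tperm a' b' * tperm b' c')%g ->
    tperm p r != tperm a' b' -> tperm p r = tperm b' c' \/ tperm p r = tperm a' c'.
  move=> pr F nab; case: (tperm_mul_3cycle a'b' b'c' a'c' pr F) => [E|->|->]; [|by left|by right].
  by rewrite E eqxx in nab.
exact: (bruhat_3cycle_mid_uniq a'b' b'c' a'c' up0 up0' (cand _ _ _ _ pr1 F1 n1)
          (cand _ _ _ _ pr2 F2 n2) up1 up1' up2 up2').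
Qed.

End BruhatDiamond.

(** * Standardization *)

Definition perm_or_id (T : finType) (f : T -> T) : {perm T} := insubd (1%g : {perm T}) (finfun f).

Lemma perm_or_idE (T : finType) (f : T -> T) : injective f -> perm_or_id f =1 f.
Proof.
move=> f_inj x; have inj_ff : injectiveb (finfun f).
  by apply/injectiveP => y z; rewrite !ffunE => /f_inj.
by rewrite /perm_or_id -pvalE insubdK //= ffunE.
Qed.

Lemma perm_on_tpermS (T : finType) (S : {set T}) (a b : T) :
  a \in S -> b \in S -> perm_on S (tperm a b).
Proof.
by move=> aS bS; apply/subsetP => v; rewrite inE; case: tpermP => [->|->|_ _]; rewrite ?eqxx.
Qed.

Lemma perm_on_tperm (T : finType) (S : {set T}) (a b : T) : a != b ->
  perm_on S (tperm a b) = (a \in S) && (b \in S).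
Proof.
move=> ab; apply/idP/andP => [/subsetP on_ab | [aS bS]]; last exact: perm_on_tpermS.
by rewrite !on_ab // inE ?tpermL ?tpermR // eq_sym.
Qed.

Lemma lt_enum_rank_in n (A : {pred 'I_n}) (a0 : 'I_n) (Aa0 : a0 \in A) (p q : 'I_n) :
  p \in A -> q \in A -> (Order.enum_rank_in Aa0 p < Order.enum_rank_in Aa0 q) = (p < q).
Proof.
move=> Ap Aq; have := Order.le_enum_rank_in (@Order.TotalTheory.le_total _ 'I_n) Aa0 Aq Ap.
by rewrite !leEord !ltnNge => ->.
Qed.

Section Standardization.
Variables (n : nat) (u : {perm 'I_n}) (S : {set 'I_n}) (s0 : 'I_n).
Hypothesis Ss0 : s0 \in S.
Implicit Types (x y t : {perm 'I_n}) (a b p v : 'I_n).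
Local Notation k := #|S|.

Definition Spos : {set 'I_n} := u @^-1: S.

Lemma Spos_s0 : (u^-1)%g s0 \in Spos.
Proof. by rewrite inE permKV. Qed.

Lemma card_Spos : #|Spos| = k.
Proof. exact: card_preimset perm_inj. Qed.

Definition letter (j : 'I_k) : 'I_n := Order.enum_val j.
Definition lrank v : 'I_k := Order.enum_rank_in Ss0 v.
Definition position (i : 'I_k) : 'I_n := Order.enum_val (cast_ord (esym card_Spos) i).
Definition prank p : 'I_k := cast_ord card_Spos (Order.enum_rank_in Spos_s0 p).

Lemma letter_in j : letter j \in S. Proof. exact: Order.enum_valP. Qed.
Lemma letterK : cancel letter lrank. Proof. exact: Order.enum_valK_in. Qed.
Lemma lrankK : {in S, cancel lrank letter}. Proof. exact: Order.enum_rankK_in. Qed.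
Lemma position_in i : position i \in Spos. Proof. exact: Order.enum_valP. Qed.

Lemma positionK : cancel position prank.
Proof. by move=> i; apply: val_inj; rewrite /= Order.enum_valK_in. Qed.

Lemma prankK : {in Spos, cancel prank position}.
Proof.
move=> p Sp; rewrite /position /prank cast_ordK.
exact: Order.enum_rankK_in.
Qed.

Lemma lrank_lt : {in S &, {mono lrank : a b / a < b}}.
Proof. by move=> a b; apply: lt_enum_rank_in. Qed.

Lemma prank_lt : {in Spos &, {mono prank : a b / a < b}}.
Proof. by move=> a b Sa Sb; rewrite /= lt_enum_rank_in. Qed.

Lemma lrank_inj : {in S &, injective lrank}.
Proof. by move=> a b Sa Sb Eab; rewrite -(lrankK Sa) -(lrankK Sb) Eab. Qed.

(* x agrees with u at every position p with u p outside S. *)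
Definition agrees x := perm_on S (u^-1 * x)%g.

Lemma agrees_u : agrees u.
Proof. by rewrite /agrees mulVg perm_on1. Qed.

Lemma agrees_out x p : agrees x -> p \notin Spos -> x p = u p.
Proof.
move=> ax; rewrite inE => upS.
by have := out_perm ax upS; rewrite permM permK.
Qed.

Lemma agrees_in x p : agrees x -> (x p \in S) = (p \in Spos).
Proof. by move=> ax; rewrite inE -[RHS](perm_closed _ ax) permM permK. Qed.

Lemma agreesM x t : agrees x -> perm_on S t -> agrees (x * t).
Proof. by rewrite /agrees mulgA; apply: perm_onM. Qed.

Lemma agrees_blabel x y : agrees x -> agrees y -> perm_on S (blabel x y).
Proof.
move=> ax ay; have -> : blabel x y = ((u^-1 * x)^-1 * (u^-1 * y))%g.
  by rewrite /blabel invMg invgK !mulgA mulgK.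
by apply: perm_onM => //; apply: perm_onV.
Qed.

Lemma agrees_mid x y z : agrees x -> agrees y -> bedge x z -> bedge z y -> agrees z.
Proof.
move=> ax ay /bedge_mul_tperm[a [b [_ Ez up1]]] /bedge_mul_tperm[c [d [_ Ey up2]]].
have Sxy := agrees_blabel ax ay; rewrite /blabel Ey Ez -mulgA mulKg in Sxy.
have neq1 : (tperm a b * tperm c d != 1)%g.
  by apply: contraTneq up2 => E1; rewrite Ey Ez -mulgA E1 mulg1 -leqNgt -Ez ltnW.
by rewrite Ez; apply: agreesM ax (perm_on_tperm_mull Sxy neq1).
Qed.

Definition std x : {perm 'I_k} := perm_or_id (fun i => lrank (x (position i))).

Lemma stdE x i : agrees x -> std x i = lrank (x (position i)).
Proof.
move=> ax; apply: perm_or_idE => i1 i2 /lrank_inj E.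
by apply: (can_inj positionK); apply: perm_inj; apply: E; rewrite agrees_in ?position_in.
Qed.

Lemma stdVE x j : agrees x -> (std x)^-1%g j = prank (x^-1%g (letter j)).
Proof.
move=> ax; apply: (@perm_inj _ (std x)); rewrite permKV stdE //.
by rewrite prankK ?permKV ?letterK // -(agrees_in _ ax) permKV letter_in.
Qed.

Lemma std_inj x y : agrees x -> agrees y -> std x = std y -> x = y.
Proof.
move=> ax ay Exy; apply/permP => p; case: (boolP (p \in Spos)) => Sp.
  have := congr1 (fun s : {perm 'I_k} => s (prank p)) Exy.
  rewrite /= !stdE // prankK // => /lrank_inj; apply; by rewrite agrees_in.
by rewrite !agrees_out.
Qed.

Definition unstd (s : {perm 'I_k}) : {perm 'I_n} :=
  perm_or_id (fun p => if p \in Spos then letter (s (prank p)) else u p).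

Lemma unstdE s p : unstd s p = if p \in Spos then letter (s (prank p)) else u p.
Proof.
apply: perm_or_idE => p1 p2.
case: (boolP (p1 \in Spos)) => S1; case: (boolP (p2 \in Spos)) => S2.
- by move/(congr1 lrank); rewrite !letterK => /perm_inj/(congr1 position); rewrite !prankK.
- by move=> E; move: S2; rewrite inE -E letter_in.
- by move=> E; move: S1; rewrite inE E letter_in.
- exact: perm_inj.
Qed.

Lemma unstd_agrees s : agrees (unstd s).
Proof.
apply/subsetP => v; rewrite inE permM unstdE; apply: contraR => vS.
by rewrite inE permKV (negbTE vS).
Qed.

Lemma std_unstd s : std (unstd s) = s.
Proof. by apply/permP => i; rewrite stdE ?unstd_agrees // unstdE position_in positionK letterK. Qed.

Definition std_label t : {perm 'I_k} := perm_or_id (fun j => lrank (t (letter j))).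

Lemma std_labelE t j : perm_on S t -> std_label t j = lrank (t (letter j)).
Proof.
move=> St; apply: perm_or_idE => j1 j2 /lrank_inj E.
by apply: (can_inj letterK); apply: perm_inj; apply: E; rewrite perm_closed ?letter_in.
Qed.

Lemma std_label_inj t t' : perm_on S t -> perm_on S t' -> std_label t = std_label t' -> t = t'.
Proof.
move=> St St' E; apply/permP => v; case: (boolP (v \in S)) => Sv.
  2: by rewrite (out_perm St) ?(out_perm St').
have := congr1 (fun s : {perm 'I_k} => s (lrank v)) E.
rewrite /= !std_labelE // lrankK // => /lrank_inj; apply; by rewrite perm_closed.
Qed.

Lemma std_blabel x y : agrees x -> agrees y -> blabel (std x) (std y) = std_label (blabel x y).
Proof.
move=> ax ay; apply/permP => j; rewrite std_labelE ?agrees_blabel //.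
by rewrite /blabel !permM stdVE // stdE // prankK // -(agrees_in _ ax) permKV letter_in.
Qed.

Lemma std_label_tperm a b : a \in S -> b \in S -> std_label (tperm a b) = tperm (lrank a) (lrank b).
Proof.
move=> Sa Sb; have St := perm_on_tpermS Sa Sb.
have letterE j v : v \in S -> (letter j == v) = (j == lrank v).
  by move=> Sv; apply/eqP/eqP => [<-|->]; rewrite ?letterK ?lrankK.
apply/permP => j; rewrite std_labelE // !tpermE !letterE //.
by case: (j == lrank a); last case: (j == lrank b); rewrite ?letterK.
Qed.

Lemma is_transp_std_label t : perm_on S t -> is_transp (std_label t) = is_transp t.
Proof.
move=> St; apply/idP/idP.
  case/existsP=> c /existsP[d /andP[cd /eqP E]].
  have scd : letter c != letter d by rewrite (inj_eq (can_inj letterK)).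
  apply/existsP; exists (letter c); apply/existsP; exists (letter d); rewrite scd /=.
  apply/eqP/std_label_inj; rewrite ?perm_on_tperm ?letter_in //.
  by rewrite E std_label_tperm ?letter_in // !letterK.
case/existsP=> a /existsP[b /andP[ab /eqP E]].
have /andP[Sa Sb] : (a \in S) && (b \in S) by rewrite -perm_on_tperm // -E.
apply/existsP; exists (lrank a); apply/existsP; exists (lrank b).
by rewrite E std_label_tperm // eqxx andbT (inj_in_eq lrank_inj).
Qed.

Lemma bedge_std x y : agrees x -> agrees y -> bedge (std x) (std y) = bedge x y.
Proof.
move=> ax ay; rewrite /bedge std_blabel // is_transp_std_label ?agrees_blabel //.
case/boolP: (is_transp (blabel x y)) => //= /existsP[a /existsP[b /andP[ab /eqP E]]].
have /andP[Sa Sb] : (a \in S) && (b \in S) by rewrite -perm_on_tperm // -E agrees_blabel.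
have Ey : y = (x * tperm a b)%g by rewrite -E /blabel mulKVg.
have Esy : std y = (std x * tperm (lrank a) (lrank b))%g.
  by rewrite -std_label_tperm // -E -std_blabel // /blabel mulKVg.
have xVS v : v \in S -> x^-1%g v \in Spos by move=> Sv; rewrite -(agrees_in _ ax) permKV.
rewrite Esy Ey !ell_mul_tperm ?(inj_in_eq lrank_inj) // !stdVE // !lrankK //.
by rewrite lrank_lt // prank_lt ?xVS.
Qed.

Lemma tlt_std_label t1 t2 : perm_on S t1 -> perm_on S t2 ->
  tlt t1 t2 -> tlt (std_label t1) (std_label t2).
Proof.
move=> S1 S2 /existsP[a /existsP[b /existsP[c /existsP[d /and5P[ab cd /eqP E1 /eqP E2 lex]]]]].
have lt_neq (p q : 'I_n) : p < q -> p != q by move=> pq; rewrite -val_eqE neq_ltn pq.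
have /andP[Sa Sb] : (a \in S) && (b \in S) by rewrite -perm_on_tperm ?lt_neq // -E1.
have /andP[Sc Sd] : (c \in S) && (d \in S) by rewrite -perm_on_tperm ?lt_neq // -E2.
apply/existsP; exists (lrank a); apply/existsP; exists (lrank b).
apply/existsP; exists (lrank c); apply/existsP; exists (lrank d).
by rewrite E1 E2 !std_label_tperm // !lrank_lt // ab cd !eqxx (inj_in_eq lrank_inj).
Qed.

End Standardization.

(** * Flips *)

Lemma connect_invariant (T : finType) (e : rel T) (P : pred T) x y :
  (forall a b, P a -> e a b -> P b) -> P x -> connect e x y -> P y.
Proof.
move=> inv_P Px /connectP[p pth ->]; elim: p x Px pth => //= b p IH a Pa /andP[eab pth].
exact: IH (inv_P _ _ Pa eab) pth.
Qed.

Lemma connect_map (T U : finType) (e : rel T) (e' : rel U) (m : T -> U) (P : pred T) x y :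
  (forall a b, P a -> e a b -> P b /\ e' (m a) (m b)) -> P x ->
  connect e x y -> connect e' (m x) (m y).
Proof.
move=> map_e Px /connectP[p pth ->]; elim: p x Px pth => //= b p IH a Pa /andP[eab pth].
have [Pb e'ab] := map_e _ _ Pa eab.
exact: connect_trans (connect1 e'ab) (IH _ Pb pth).
Qed.

Lemma connect_lift (T U : finType) (e : rel T) (e' : rel U) (m : T -> U) (P : pred T) x y' :
  (forall a b', P a -> e' (m a) b' -> exists2 b, P b /\ e a b & b' = m b) -> P x ->
  connect e' (m x) y' -> exists2 y, connect e x y & y' = m y.
Proof.
move=> lift_e Px /connectP[p pth ->]; elim: p x Px pth => /= [|b' p IH] a Pa.
  by exists a.
case/andP=> eab' pth; have [b [Pb eab] Eb] := lift_e _ _ Pa eab'.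
rewrite Eb in pth *; have [y cy ->] := IH _ Pb pth.
by exists y => //; exact: connect_trans (connect1 eab) cy.
Qed.

Lemma PhP h n (u v : {perm 'I_n}) (G : hpath h n) :
  reflect [/\ is_bpath G, G ord0 = u & G ord_max = v] (G \in Ph h u v).
Proof. by rewrite inE; apply: (iffP and3P) => [[? /eqP-> /eqP->] | [? -> ->]]. Qed.

Section Flips.
Variables h n : nat.
Implicit Types (G : hpath h n) (i : 'I_h.+1).

Lemma hpath_ind G (P : {perm 'I_n} -> Prop) :
  P (G ord0) -> (forall k : 'I_h, P (G (src k)) -> P (G (tgt k))) -> forall i, P (G i).
Proof.
move=> P0 Pstep [m]; elim: m => [|m IH] lt_m.
  by rewrite (_ : Ordinal lt_m = ord0) //; apply: ord_inj.
have lt_mh : m < h by [].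
have := Pstep (Ordinal lt_mh); rewrite (_ : tgt _ = Ordinal lt_m); last by apply: ord_inj.
by apply; rewrite (_ : src _ = Ordinal (ltnW lt_m)) //; apply: ord_inj.
Qed.

Lemma flip_ind G i (Q : {perm 'I_n} -> Prop) :
  (forall k, Q (G k)) ->
  (0 < i < h -> forall z, bedge (G (inord i.-1)) z -> bedge z (G (inord i.+1)) -> Q z) ->
  forall k, Q (flip i G k).
Proof.
move=> QG Qmid k; rewrite /flip; case: ifP => // ih.
case: pickP => // z /and3P[_ e1 e2].
by rewrite ffunE; case: eqP => // _; apply: Qmid.
Qed.

Lemma bpath_around G i : is_bpath G -> 0 < i < h ->
  bedge (G (inord i.-1)) (G i) /\ bedge (G i) (G (inord i.+1)).
Proof.
move=> /forallP BG /andP[i0 ih]; have ih' : i.-1 < h by lia.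
have := BG (Ordinal ih'); have := BG (Ordinal ih).
have -> : src (Ordinal ih') = inord i.-1 by apply: ord_inj; rewrite inordK //=; lia.
have -> : tgt (Ordinal ih') = i by apply: ord_inj; rewrite /= /bump /=; lia.
have -> : src (Ordinal ih) = i by apply: ord_inj.
have -> : tgt (Ordinal ih) = inord i.+1 by apply: ord_inj; rewrite inordK /= /bump //=; lia.
by [].
Qed.

Lemma flip_bpath G i : is_bpath G -> is_bpath (flip i G).
Proof.
move=> BG; rewrite /flip; case: ifP => // /andP[i0 ih].
case: pickP => // z /and3P[_ e1 e2]; apply/forallP => k; rewrite !ffunE.
have [vs vt] : (src k : nat) = k /\ (tgt k : nat) = k.+1 by rewrite /= /bump.
have ltk := ltn_ord k.
case: (eqVneq (src k) i) => [Es|Ns]; case: (eqVneq (tgt k) i) => [Et|Nt].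
- by move: vs vt; rewrite Es Et; lia.
- have Ei : (i : nat) = k by rewrite -Es.
  have -> : tgt k = inord i.+1 by apply: ord_inj; rewrite inordK Ei /= /bump ?add1n //; lia.
  exact: e2.
- have Ei : (i : nat) = k.+1 by rewrite -Et.
  have -> : src k = inord i.-1 by apply: ord_inj; rewrite inordK Ei //; lia.
  exact: e1.
- exact: (forallP BG).
Qed.

End Flips.

Section FlipTransfer.
Variables (h n m : nat) (f : {perm 'I_n} -> {perm 'I_m}) (V : pred {perm 'I_n}).
Hypothesis V_mid : forall x y z, V x -> V y -> bedge x z -> bedge z y -> V z.
Hypothesis f_inj : forall x y, V x -> V y -> f x = f y -> x = y.
Hypothesis bedge_f : forall x y, V x -> V y -> bedge (f x) (f y) = bedge x y.
Hypothesis f_onto : forall z, exists2 x, V x & f x = z.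
Implicit Types (G : hpath h n) (i : 'I_h.+1).

Definition good_path : pred (hpath h n) := fun G => [forall k, V (G k)] && is_bpath G.

Lemma flip_good G i : good_path G -> good_path (flip i G).
Proof.
case/andP=> /forallP VG BG; rewrite /good_path flip_bpath // andbT.
by apply/forallP; apply: (flip_ind (Q := V)) => // _ z; apply: V_mid.
Qed.

(* Both flips [pick] a middle vertex other than G i; there is at most one by
   bruhat_mid_uniq, so the two choices correspond under f. *)
Lemma mapP_flip G i : good_path G -> mapP f (flip i G) = flip i (mapP f G).
Proof.
case/andP=> /forallP VG BG; rewrite /flip; case: ifP => // ih.
rewrite !ffunE; set X := G (inord i.-1); set Y := G (inord i.+1).
have [eX eY] := bpath_around BG ih.
have mid_eq z z' : bedge X z -> bedge z Y -> z != G i ->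
    bedge X z' -> bedge z' Y -> z' != G i -> z = z'.
  move=> e1 e2 nz e1' e2' nz'; exact: bruhat_mid_uniq eX eY e1 e2 e1' e2' nz nz'.
case: pickP => [z /and3P[nz e1 e2] | no_z]; case: pickP => [z' | no_z'].
- have Vz := V_mid (VG _) (VG _) e1 e2.
  case/and3P; have [w Vw <-] := f_onto z'; rewrite !bedge_f ?VG // => nw e1' e2'.
  have nw' : w != G i by apply: contra nw => /eqP ->.
  rewrite (mid_eq _ _ e1 e2 nz e1' e2' nw').
  by apply/ffunP => k; rewrite !ffunE; case: eqP.
- have Vz := V_mid (VG _) (VG _) e1 e2.
  have nfz : f z != f (G i) by apply: contra nz => /eqP/f_inj-> //; exact: VG.
  by have := no_z' (f z); rewrite /= nfz !bedge_f ?VG // e1 e2.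
- case/and3P; have [w Vw <-] := f_onto z'; rewrite !bedge_f ?VG // => nw e1' e2'.
  have nw' : w != G i by apply: contra nw => /eqP ->.
  by have := no_z w; rewrite /= nw' e1' e2'.
- by apply/ffunP => k; rewrite !ffunE.
Qed.

Lemma flip_orbit_good G H : good_path G -> H \in flip_orbit G -> good_path H.
Proof.
rewrite inE => GG; apply: connect_invariant GG => a b Ga /existsP[i /and3P[_ _ /eqP ->]].
exact: flip_good.
Qed.

Lemma flip_orbit_mapP G : good_path G ->
  [set mapP f H | H in flip_orbit G] = flip_orbit (mapP f G).
Proof.
move=> GG; apply/setP => H'; rewrite inE; apply/imsetP/idP.
  case=> H; rewrite inE => cGH ->; apply: connect_map GG cGH.
  move=> a b Ga /existsP[i /and3P[i0 ih /eqP ->]]; split; first exact: flip_good.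
  by apply/existsP; exists i; rewrite i0 ih mapP_flip // eqxx.
have lift a b' : good_path a -> flipstep (mapP f a) b' ->
    exists2 b, good_path b /\ flipstep a b & b' = mapP f b.
  move=> Ga /existsP[i /and3P[i0 ih /eqP ->]]; exists (flip i a); last by rewrite mapP_flip.
  by split; [exact: flip_good | apply/existsP; exists i; rewrite i0 ih eqxx].
by move=> c; have [H cGH ->] := connect_lift lift GG c; exists H; rewrite // inE.
Qed.

Lemma flipclass_mapP u v G : G \in Ph h u v -> good_path G ->
  is_flipclass [set mapP f H | H in flip_orbit G].
Proof.
case/PhP=> _ G0 Gh GG; rewrite flip_orbit_mapP //.
exists (f u), (f v), (mapP f G); split => //; rewrite inE !ffunE G0 Gh !eqxx !andbT.
case/andP: GG => /forallP VG /forallP BG; apply/forallP => k.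
by rewrite !ffunE bedge_f.
Qed.

End FlipTransfer.

Notation blabel_at H k := (blabel (H (src k)) (H (tgt k))).

Section MapIso.
Variables (h n m : nat) (F : {set hpath h n}) (f g : {perm 'I_n} -> {perm 'I_m}).
Hypothesis f_inj : {in fverts F &, injective f}.
Hypothesis mapP_flip : forall G, G \in F -> forall i : 'I_h.+1, 0 < i -> i < h ->
  mapP f (flip i G) = flip i (mapP f G).
Hypothesis g_inj : {in flabels F &, injective g}.
Hypothesis blabel_mapP : forall G, G \in F -> forall k, blabel_at (mapP f G) k = g (blabel_at G k).
Hypothesis g_tlt : {in flabels F &, forall t1 t2, tlt t1 t2 -> tlt (g t1) (g t2)}.

Lemma fverts_mapP : fverts (mapP f @: F) = f @: fverts F.
Proof.
apply/setP => x'; rewrite inE; apply/existsP/imsetP.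
  case=> H' /andP[/imsetP[H HF ->] /existsP[k /eqP <-]].
  exists (H k); last by rewrite ffunE.
  by rewrite inE; apply/existsP; exists H; rewrite HF; apply/existsP; exists k.
case=> x /[!inE] /existsP[H /andP[HF /existsP[k /eqP <-]]] ->.
by exists (mapP f H); rewrite imset_f //=; apply/existsP; exists k; rewrite ffunE.
Qed.

Lemma flabels_mapP : flabels (mapP f @: F) = g @: flabels F.
Proof.
apply/setP => t'; rewrite inE; apply/existsP/imsetP.
  case=> H' /andP[/imsetP[H HF ->] /existsP[k /eqP ->]].
  exists (blabel_at H k); last exact: blabel_mapP.
  by rewrite inE; apply/existsP; exists H; rewrite HF; apply/existsP; exists k.
case=> t /[!inE] /existsP[H /andP[HF /existsP[k /eqP ->]]] ->.
by exists (mapP f H); rewrite imset_f //=; apply/existsP; exists k; rewrite blabel_mapP.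
Qed.

Lemma in_fverts H k : H \in F -> H k \in fverts F.
Proof. by move=> HF; rewrite inE; apply/existsP; exists H; rewrite HF; apply/existsP; exists k. Qed.

Lemma mapP_inj : {in F &, injective (mapP f)}.
Proof.
move=> H1 H2 HF1 HF2 E; apply/ffunP => k.
have := congr1 (fun H : hpath h m => H k) E; rewrite /mapP !ffunE.
by apply: f_inj; apply: in_fverts.
Qed.

Lemma flip_iso_mapP : flip_iso F (mapP f @: F).
Proof.
exists f, g; split.
- by split; [exact: f_inj | rewrite fverts_mapP].
- by split; [exact: mapP_inj |].
- exact: mapP_flip.
- by split; [exact: g_inj | rewrite flabels_mapP].
- by split; [exact: blabel_mapP | exact: g_tlt].
Qed.

End MapIso.

(** * Localization of a flipclass *)

Definition moved (T : finType) (t : {perm T}) : {set T} := [set w | t w != w].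

Lemma card_moved_tperm (T : finType) (a b : T) : #|moved (tperm a b)| <= 2.
Proof.
apply: leq_trans (subset_leq_card (_ : _ \subset [set a; b])) _.
  by apply/subsetP => w; rewrite !inE; case: tpermP => [->|->|_ _]; rewrite ?eqxx ?orbT.
by rewrite cards2; case: (a != b).
Qed.

Lemma card_bigcup_le (I T : finType) (F : I -> {set T}) : #|\bigcup_i F i| <= \sum_i #|F i|.
Proof.
elim/big_rec2: _ => [|i k A _ IH]; first by rewrite cards0.
by apply: leq_trans (leq_card_setU _ _) _; rewrite leq_add2l.
Qed.

Section Localization.
Variables (h n : nat) (u v : {perm 'I_n}) (G : hpath h n) (s0 : 'I_n).
Hypothesis G_in : G \in Ph h u v.

(* s0 only makes the set nonempty. *)
Definition path_support : {set 'I_n} := s0 |: \bigcup_(k < h) moved (blabel_at G k).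
Local Notation S := path_support.

Lemma path_support_s0 : s0 \in S.
Proof. exact: setU11. Qed.

Lemma card_path_support : #|S| <= h.*2.+1.
Proof.
have le2 k : #|moved (blabel_at G k)| <= 2.
  case/PhP: G_in => /forallP/(_ k)/andP[/existsP[a /existsP[b /andP[_ /eqP ->]]] _] _ _.
  exact: card_moved_tperm.
rewrite cardsU1 -[h.*2.+1]add1n leq_add ?leq_b1 //.
apply: leq_trans (card_bigcup_le _) _.
by rewrite -muln2 -[X in X * 2](card_ord h) -sum_nat_const leq_sum.
Qed.

Lemma perm_on_blabel_at k : perm_on S (blabel_at G k).
Proof.
apply/subsetP => w mw; rewrite !inE; apply/orP; right.
by apply/bigcupP; exists k => //; rewrite inE.
Qed.

Local Notation agreesS := (agrees u S).

Lemma path_agrees k : agreesS (G k).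
Proof.
case/PhP: G_in => _ G0 _; apply: (hpath_ind (P := fun x => agreesS x)) => [|j aj].
  by rewrite G0; apply: agrees_u.
by rewrite -(mulKVg (G (src j)) (G (tgt j))); apply: agreesM aj (perm_on_blabel_at j).
Qed.

Local Notation std := (std u path_support_s0).

Lemma std_onto s : exists2 x, agreesS x & std x = s.
Proof. by exists (unstd u path_support_s0 s); [apply: unstd_agrees | apply: std_unstd]. Qed.

Lemma path_good : good_path agreesS G.
Proof. by apply/andP; split; [apply/forallP => k; apply: path_agrees | case/PhP: G_in]. Qed.

Definition std_orbit := [set mapP std H | H in flip_orbit G].

Lemma std_orbit_flipclass : is_flipclass std_orbit.
Proof.
exact: (flipclass_mapP (@agrees_mid _ u S) (@std_inj _ u S _ path_support_s0)
          (@bedge_std _ u S _ path_support_s0) std_onto G_in path_good).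
Qed.

Lemma orbit_good H : H \in flip_orbit G -> good_path agreesS H.
Proof. exact: (flip_orbit_good (@agrees_mid _ u S) path_good). Qed.

Lemma fverts_agrees x : x \in fverts (flip_orbit G) -> agreesS x.
Proof.
rewrite inE => /existsP[H /andP[/orbit_good /andP[/forallP VH _] /existsP[k /eqP <-]]].
exact: VH.
Qed.

Lemma flabels_perm_on t : t \in flabels (flip_orbit G) -> perm_on S t.
Proof.
rewrite inE => /existsP[H /andP[/orbit_good /andP[/forallP VH _] /existsP[k /eqP ->]]].
exact: agrees_blabel.
Qed.

Lemma flip_orbit_std_iso : flip_iso (flip_orbit G) std_orbit.
Proof.
apply: (flip_iso_mapP (g := std_label path_support_s0)).
- by move=> x y /fverts_agrees ax /fverts_agrees ay; apply: std_inj.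
- move=> H /orbit_good GH i _ _.
  exact: (mapP_flip (@agrees_mid _ u S) (@std_inj _ u S _ path_support_s0)
            (@bedge_std _ u S _ path_support_s0) std_onto).
- by move=> t t' /flabels_perm_on St /flabels_perm_on St'; apply: std_label_inj.
- move=> H /orbit_good /andP[/forallP VH _] k.
  by rewrite !ffunE std_blabel.
- by move=> t t' /flabels_perm_on St /flabels_perm_on St'; apply: tlt_std_label.
Qed.

End Localization.

(** * Finitely many representatives *)

Definition is_flipclassb h n (F : {set hpath h n}) : bool :=
  [exists u : {perm 'I_n}, exists v : {perm 'I_n}, exists G : hpath h n,
     (G \in Ph h u v) && (F == flip_orbit G)].

Lemma is_flipclassP h n (F : {set hpath h n}) : reflect (is_flipclass F) (is_flipclassb F).
Proof.
apply: (iffP idP) => [|[u [v [G [G_in ->]]]]].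
  by case/existsP=> u /existsP[v /existsP[G /andP[G_in /eqP ->]]]; exists u, v, G.
by apply/existsP; exists u; apply/existsP; exists v; apply/existsP; exists G; rewrite G_in eqxx.
Qed.

Definition small_flipclasses h : seq {n : nat & {set hpath h n}} :=
  flatten [seq [seq Tagged (fun n => {set hpath h n}) F
                  | F <- enum {set hpath h n} & is_flipclassb F]
          | n <- iota 1 h.*2.+1].

Lemma small_flipclassesP h (p : {n : nat & {set hpath h n}}) :
  p \in small_flipclasses h -> 0 < tag p /\ is_flipclass (tagged p).
Proof.
case/flattenP=> _ /seq.mapP[n n_in ->] /seq.mapP[F F_in ->] /=.
by move: n_in F_in; rewrite mem_iota mem_filter => /andP[n_gt0 _] /andP[/is_flipclassP].
Qed.

Lemma mem_small_flipclasses h n (F : {set hpath h n}) : 0 < n <= h.*2.+1 ->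
  is_flipclass F -> Tagged (fun n => {set hpath h n}) F \in small_flipclasses h.
Proof.
move=> n_range F_cls; apply/flattenP; eexists.
  by apply/seq.mapP; exists n; rewrite // mem_iota; lia.
by apply/seq.mapP; exists F; rewrite // mem_filter mem_enum andbT; apply/is_flipclassP.
Qed.

Theorem corollary6p13 (h : nat) :
  exists (K : nat) (ns : 'I_K -> nat)
         (R : forall j : 'I_K, {set {ffun 'I_h.+1 -> {perm 'I_(ns j)}}}),
    (forall j : 'I_K, 0 < ns j /\ is_flipclass (R j)) /\
    (forall (n : nat) (F : {set {ffun 'I_h.+1 -> {perm 'I_n}}}),
        0 < n -> is_flipclass F -> exists j : 'I_K, flip_iso F (R j)).
Proof.
pose s := small_flipclasses h.
pose p0 := Tagged (fun n => {set hpath h n}) (set0 : {set hpath h 0}).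
exists (size s), (fun j => tag (nth p0 s j)), (fun j => tagged (nth p0 s j)); split.
  by move=> j; apply/small_flipclassesP/mem_nth.
move=> n F n_gt0 [u [v [G [G_in ->]]]].
pose s0 : 'I_n := Ordinal n_gt0.
have rep_in : Tagged (fun n => {set hpath h n}) (std_orbit u G s0) \in s.
  apply: (mem_small_flipclasses (F := std_orbit u G s0)); last exact: std_orbit_flipclass G_in.
  rewrite (card_path_support _ G_in) andbT card_gt0.
  by apply/set0Pn; exists s0; apply: path_support_s0.
exists (Ordinal (etrans (index_mem _ s) rep_in)).
by rewrite /= nth_index //; exact: flip_orbit_std_iso G_in.
Qed.
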